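(* Let $Z$ be a metric space and let $X, Y \subseteq Z$ be compact subsets. Regard $\mathcal{H}(X)$ and $\mathcal{H}(Y)$ as subsets of the metric space $\mathcal{H}(Z)$ (with the Hausdorff distance). Then $$\bigl|\mathcal{H}(X)\,\mathcal{H}(Y)\bigr|_{\mathcal{H}(Z)} = |XY|_Z,$$ i.e. the Hausdorff distance in $\mathcal{H}(Z)$ between $\mathcal{H}(X)$ and $\mathcal{H}(Y)$ equals the Hausdorff distance in $Z$ between $X$ and $Y$.
   Context: For a metric space $Z$, $|xy|$ denotes the distance between points; for nonempty $B \subseteq Z$ and $x \in Z$, $|xB| = \inf\{|xb| : b \in B\}$. For nonempty subsets $P,Q$ of a metric space $W$, the Hausdorff distance is $|PQ|_W = \max\{\sup_{p\in P}|pQ|, \sup_{q\in Q}|qP|\}$. For a metric space $W$, $\mathcal{H}(W)$ (the Hausdorff hyperspace) is the family of all nonempty bounded closed subsets of $W$ endowed with the Hausdorff distance; for compact $X\subseteq Z$, $\mathcal{H}(X)\subseteq\mathcal{H}(Z)$. *)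

From Stdlib Require Import Reals List.
Open Scope R_scope.

Definition is_inf (E : R -> Prop) (m : R) : Prop :=
  (forall x, E x -> m <= x) /\ (forall b, (forall x, E x -> b <= x) -> b <= m).
Definition is_sup (E : R -> Prop) (m : R) : Prop :=
  (forall x, E x -> x <= m) /\ (forall b, (forall x, E x -> x <= b) -> m <= b).

(* A "distance relation" D x y t : "the distance between x and y is t".
   This lets us treat Z (with D x y t := t = dist x y) and the hyperspace
   H(Z) (with D := Hausdorff distance relation) uniformly. *)

Definition dist_pt_set {A : Type} (D : A -> A -> R -> Prop)
    (x : A) (B : A -> Prop) (r : R) : Prop :=
  is_inf (fun t => exists b, B b /\ D x b t) r.

Definition hausdorff {A : Type} (D : A -> A -> R -> Prop)
    (P Q : A -> Prop) (r : R) : Prop :=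
  exists s1 s2,
    is_sup (fun t => exists p, P p /\ dist_pt_set D p Q t) s1 /\
    is_sup (fun t => exists q, Q q /\ dist_pt_set D q P t) s2 /\
    r = Rmax s1 s2.

Definition mdist (Z : Metric_Space) : Base Z -> Base Z -> R -> Prop :=
  fun x y t => t = dist Z x y.

Definition hdist (Z : Metric_Space) : (Base Z -> Prop) -> (Base Z -> Prop) -> R -> Prop :=
  hausdorff (mdist Z).

Definition is_open (Z : Metric_Space) (U : Base Z -> Prop) : Prop :=
  forall x, U x -> exists eps, eps > 0 /\ forall y, dist Z x y < eps -> U y.

Definition mcompact (Z : Metric_Space) (X : Base Z -> Prop) : Prop :=
  forall (I : Type) (U : I -> Base Z -> Prop),
    (forall i, is_open Z (U i)) ->
    (forall x, X x -> exists i, U i x) ->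
    exists l : list I, forall x, X x -> exists i, In i l /\ U i x.

Definition nonempty {T : Type} (A : T -> Prop) : Prop := exists a, A a.

Definition bounded (Z : Metric_Space) (A : Base Z -> Prop) : Prop :=
  exists M, forall a b, A a -> A b -> dist Z a b <= M.

Definition closed_in (Z : Metric_Space) (W A : Base Z -> Prop) : Prop :=
  forall x, W x ->
    (forall eps, eps > 0 -> exists a, A a /\ dist Z x a < eps) -> A x.

(* A ∈ H(W): nonempty bounded closed subset of the subspace W of Z.
   H(Z) is  inH Z (fun _ => True). *)
Definition inH (Z : Metric_Space) (W : Base Z -> Prop) (A : Base Z -> Prop) : Prop :=
  nonempty A /\ (forall a, A a -> W a) /\ bounded Z A /\ closed_in Z W A.

From Pilot Require Import Defs.
From Stdlib Require Import Reals List Lra Classical.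
Open Scope R_scope.

(* Only boundedness of X and Y matters.  For A in H(X), the points of Y
   within |XY| + e of A form a set B in H(Y) with |AB| <= |XY| + e, so
   sup_{A in H(X)} |A H(Y)| <= sup_{x in X} |xY|; conversely X itself is in
   H(X) and |XB| >= sup_{x in X} |xY| for every B in H(Y), since B lies in Y.
   Hence the two one-sided excesses of H(X), H(Y) equal those of X, Y. *)

(* [bounded] of Stdlib's Reals (on [R -> Prop]) would otherwise hide that of Defs. *)
Local Notation bounded := Pilot.Defs.bounded.

Definition excess {A : Type} (D : A -> A -> R -> Prop) (P Q : A -> Prop) (s : R) : Prop :=
  is_sup (fun t => exists p, P p /\ dist_pt_set D p Q t) s.

Lemma is_sup_exists (E : R -> Prop) (M : R) :
  (exists x, E x) -> (forall x, E x -> x <= M) -> exists m, is_sup E m.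
Proof.
  intros HE HM. destruct (completeness E) as [m [Hub Hlub]].
  - exists M; exact HM.
  - exact HE.
  - exists m; split; auto.
Qed.

Lemma is_inf_exists (E : R -> Prop) (M : R) :
  (exists x, E x) -> (forall x, E x -> M <= x) -> exists m, is_inf E m.
Proof.
  intros [x Ex] HM.
  destruct (is_sup_exists (fun y => E (- y)) (- M)) as [m [Hub Hlub]].
  - exists (- x). rewrite Ropp_involutive; exact Ex.
  - intros y Ey. specialize (HM _ Ey). lra.
  - exists (- m); split.
    + intros y Ey. assert (Hy : - y <= m) by (apply Hub; rewrite Ropp_involutive; exact Ey).
      lra.
    + intros b Hb. assert (Hm : m <= - b); [|lra].
      apply Hlub. intros y Ey. specialize (Hb _ Ey). lra.
Qed.

Section Hyperspace.
Variable Z : Metric_Space.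
Notation d := (dist Z).
Notation dpt := (dist_pt_set (mdist Z)).

Lemma dist_pt_set_exists x (B : Base Z -> Prop) : nonempty B -> exists r, dpt x B r.
Proof.
  intros [b Hb]. apply (is_inf_exists _ 0).
  - exists (d x b), b; split; [exact Hb | reflexivity].
  - intros t [c [_ ->]]. apply Rge_le, dist_pos.
Qed.

Lemma dist_pt_set_le x B r b : dpt x B r -> B b -> r <= d x b.
Proof. intros [Hlb _] Hb. apply Hlb. exists b; split; [exact Hb | reflexivity]. Qed.

Lemma dist_pt_set_approx x B r e :
  dpt x B r -> e > 0 -> exists b, B b /\ d x b < r + e.
Proof.
  intros [_ Hglb] He. apply NNPP. intros Hnone.
  assert (Hre : r + e <= r); [|lra].
  apply Hglb. intros t [b [Hb ->]]. apply Rnot_lt_le. intros Hlt.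
  apply Hnone; exists b; auto.
Qed.

Lemma dist_pt_set_lipschitz x y B r s : dpt x B r -> dpt y B s -> r <= s + d x y.
Proof.
  intros Hr [_ Hglb]. assert (Hs : r - d x y <= s); [|lra].
  apply Hglb. intros t [b [Hb ->]].
  pose proof (dist_pt_set_le _ _ _ _ Hr Hb). pose proof (dist_tri Z x b y). lra.
Qed.

Lemma dist_pt_set_antitone x (B C : Base Z -> Prop) r s :
  (forall b, B b -> C b) -> dpt x B r -> dpt x C s -> s <= r.
Proof.
  intros HBC [_ Hglb] [Hlb _]. apply Hglb. intros t [b [Hb ->]].
  apply Hlb. exists b; split; [auto | reflexivity].
Qed.

Lemma excess_exists (A B : Base Z -> Prop) :
  nonempty A -> nonempty B -> bounded Z A -> exists s, excess (mdist Z) A B s.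
Proof.
  intros [a0 Ha0] [b0 Hb0] [M HM].
  apply (is_sup_exists _ (M + d a0 b0)).
  - destruct (dist_pt_set_exists a0 B) as [r Hr]; [exists b0; exact Hb0|].
    exists r, a0; auto.
  - intros t [a [Ha Ht]].
    pose proof (dist_pt_set_le _ _ _ _ Ht Hb0). pose proof (dist_tri Z a b0 a0).
    pose proof (HM a a0 Ha Ha0). lra.
Qed.

Lemma excess_antitone (A B C : Base Z -> Prop) s s' :
  nonempty B -> (forall b, B b -> C b) ->
  excess (mdist Z) A C s -> excess (mdist Z) A B s' -> s <= s'.
Proof.
  intros HB HBC [_ Hlub] [Hub _]. apply Hlub. intros t [a [Ha Ht]].
  destruct (dist_pt_set_exists a B HB) as [u Hu].
  pose proof (dist_pt_set_antitone _ _ _ _ _ HBC Hu Ht).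
  assert (u <= s') by (apply Hub; exists a; auto). lra.
Qed.

Lemma hdist_exists (A B : Base Z -> Prop) :
  nonempty A -> nonempty B -> bounded Z A -> bounded Z B -> exists r, hdist Z A B r.
Proof.
  intros HA HB HAb HBb.
  destruct (excess_exists A B HA HB HAb) as [s1 Hs1].
  destruct (excess_exists B A HB HA HBb) as [s2 Hs2].
  exists (Rmax s1 s2), s1, s2; auto.
Qed.

Lemma hdist_le (A B : Base Z -> Prop) r c : hdist Z A B r ->
  (forall a t, A a -> dpt a B t -> t <= c) ->
  (forall b t, B b -> dpt b A t -> t <= c) -> r <= c.
Proof.
  intros [s1 [s2 [[_ Hlub1] [[_ Hlub2] ->]]]] HA HB.
  apply Rmax_lub; [apply Hlub1 | apply Hlub2]; intros t [p [Hp Ht]]; eauto.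
Qed.

Lemma excess_le_hdist (A B : Base Z -> Prop) s r :
  excess (mdist Z) A B s -> hdist Z A B r -> s <= r.
Proof.
  intros Hs [s1 [s2 [Hs1 [_ ->]]]].
  replace s with s1 by (destruct Hs as [Hub Hlub], Hs1 as [Hub1 Hlub1];
                        apply Rle_antisym; auto).
  apply Rmax_l.
Qed.

Lemma list_dist_bounded (x0 : Base Z) (l : list (Base Z)) :
  exists M, forall i, In i l -> d i x0 <= M.
Proof.
  induction l as [|a l [M HM]].
  - exists 0; intros i [].
  - exists (Rmax (d a x0) M). intros i [<- | Hi].
    + apply Rmax_l.
    + eapply Rle_trans; [apply HM, Hi | apply Rmax_r].
Qed.

Lemma compact_bounded X : nonempty X -> mcompact Z X -> bounded Z X.
Proof.
  intros [x0 Hx0] Hcpt.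
  destruct (Hcpt (Base Z) (fun i y => d i y < 1)) as [l Hl].
  - intros i x Hx. exists (1 - d i x). split; [lra|].
    intros y Hy. pose proof (dist_tri Z i y x). lra.
  - intros x _. exists x. rewrite (proj2 (dist_refl Z x x) eq_refl). lra.
  - destruct (list_dist_bounded x0 l) as [M HM]. exists (2 + 2 * M).
    intros a b Ha Hb.
    destruct (Hl a Ha) as [i [Hi Hia]], (Hl b Hb) as [j [Hj Hjb]].
    pose proof (HM i Hi). pose proof (HM j Hj).
    pose proof (dist_tri Z a x0 i). pose proof (dist_tri Z a b x0).
    pose proof (dist_tri Z x0 b j).
    rewrite (dist_sym Z a i) in *. rewrite (dist_sym Z x0 j) in *. lra.
Qed.

Lemma inH_refl X : nonempty X -> bounded Z X -> inH Z X X.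
Proof. intros HX HXb. repeat split; auto. intros x Hx _; exact Hx. Qed.

Definition thickening_in (Y A : Base Z -> Prop) (c : R) : Base Z -> Prop :=
  fun y => Y y /\ forall u, dpt y A u -> u <= c.

Lemma thickening_in_inH Y A c :
  nonempty A -> bounded Z Y -> nonempty (thickening_in Y A c) ->
  inH Z Y (thickening_in Y A c).
Proof.
  intros HA [M HM] HT. split; [exact HT|]. split; [intros y [Hy _]; exact Hy|]. split.
  - exists M. intros a b [Ha _] [Hb _]; auto.
  - intros x Hx Happrox. split; [exact Hx|]. intros u Hu.
    apply Rle_plus_epsilon. intros e He.
    destruct (Happrox e He) as [b [[_ Hb] Hxb]].
    destruct (dist_pt_set_exists b A HA) as [u' Hu'].
    pose proof (Hb u' Hu'). pose proof (dist_pt_set_lipschitz _ _ _ _ _ Hu Hu'). lra.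
Qed.

Lemma thickening_in_near X Y A s e a :
  excess (mdist Z) X Y s -> nonempty Y -> (forall x, A x -> X x) -> e > 0 -> A a ->
  exists y, thickening_in Y A (s + e) y /\ d a y < s + e.
Proof.
  intros [Hub _] HY HAX He Ha.
  destruct (dist_pt_set_exists a Y HY) as [u Hu].
  assert (u <= s) by (apply Hub; exists a; auto).
  destruct (dist_pt_set_approx _ _ _ e Hu He) as [y [Hy Hay]].
  exists y. split; [split; [exact Hy|] | lra].
  intros u' Hu'. pose proof (dist_pt_set_le _ _ _ _ Hu' Ha).
  rewrite (dist_sym Z y a) in *. lra.
Qed.

Lemma dist_to_hyperspace_le X Y A s t :
  excess (mdist Z) X Y s -> nonempty Y -> bounded Z Y -> inH Z X A ->
  dist_pt_set (hdist Z) A (inH Z Y) t -> t <= s.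
Proof.
  intros Hs HY HYb [[a0 Ha0] [HAX [HAb _]]] [Hlb _].
  apply Rle_plus_epsilon. intros e He.
  set (B := thickening_in Y A (s + e)).
  assert (Hnear : forall a, A a -> exists y, B y /\ d a y < s + e)
    by (intros a; apply (thickening_in_near X); auto).
  assert (HBn : nonempty B) by (destruct (Hnear a0 Ha0) as [y [Hy _]]; exists y; exact Hy).
  assert (HB : inH Z Y B) by (apply thickening_in_inH; auto; exists a0; exact Ha0).
  destruct (hdist_exists A B) as [r Hr]; [exists a0; exact Ha0 | exact HBn | exact HAb |
                                          exact (proj1 (proj2 (proj2 HB))) |].
  assert (r <= s + e).
  { apply (hdist_le A B r); auto.
    - intros a u Ha Hu. destruct (Hnear a Ha) as [y [Hy Hay]].
      pose proof (dist_pt_set_le _ _ _ _ Hu Hy). lra.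
    - intros b u [_ Hb] Hu. auto. }
  assert (t <= r) by (apply Hlb; exists B; auto). lra.
Qed.

Lemma excess_hyperspace X Y s :
  nonempty X -> bounded Z X -> nonempty Y -> bounded Z Y ->
  excess (mdist Z) X Y s -> excess (hdist Z) (inH Z X) (inH Z Y) s.
Proof.
  intros HX HXb HY HYb Hs.
  assert (Hlow : forall B r, inH Z Y B -> hdist Z X B r -> s <= r).
  { intros B r [HBn [HBY [HBb _]]] Hr.
    destruct (excess_exists X B HX HBn HXb) as [s' Hs'].
    pose proof (excess_antitone X B Y s s' HBn HBY Hs Hs').
    pose proof (excess_le_hdist X B s' r Hs' Hr). lra. }
  destruct (is_inf_exists (fun r => exists B, inH Z Y B /\ hdist Z X B r) s)
    as [t [Htlb Htglb]].
  - destruct (hdist_exists X Y HX HY HXb HYb) as [r Hr].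
    exists r, Y; split; [apply inH_refl|]; auto.
  - intros r [B [HB Hr]]. eauto.
  - split.
    + intros u [A [HA Hu]]. apply (dist_to_hyperspace_le X Y A); auto.
    + intros b Hb. apply (Rle_trans _ t).
      * apply Htglb. intros r [B [HB Hr]]. eauto.
      * apply Hb. exists X. split; [apply inH_refl; auto | split; auto].
Qed.

End Hyperspace.

Theorem mainTheorem6 (Z : Metric_Space) (X Y : Base Z -> Prop) :
  nonempty X -> nonempty Y -> mcompact Z X -> mcompact Z Y ->
  exists r : R,
    hdist Z X Y r /\
    hausdorff (hdist Z) (inH Z X) (inH Z Y) r.
Proof.
  intros HX HY HXc HYc.
  pose proof (compact_bounded Z X HX HXc) as HXb.
  pose proof (compact_bounded Z Y HY HYc) as HYb.
  destruct (excess_exists Z X Y HX HY HXb) as [s1 Hs1].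
  destruct (excess_exists Z Y X HY HX HYb) as [s2 Hs2].
  exists (Rmax s1 s2). split.
  - exists s1, s2; auto.
  - exists s1, s2. split; [|split; [|reflexivity]]; apply excess_hyperspace; auto.
Qed.
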